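(* For any $\rho>0$ and $n\in\mathbb{N}$, the following randomized test $\texttt{DPBern}$ satisfies $\rho$-zCDP (with respect to datasets of $n$ rows $(x_i,y_i)\in\mathbb{R}^2$, $n$ public). Input: data $(x_1,y_1),\dots,(x_n,y_n)$, $\rho>0$, and a significance level $\alpha\in(0,1)$. Choose a uniformly random permutation $\tau$ of $[n]$, let $n_s=\lfloor n/2\rfloor$ and $s=0$. For $i=1,\dots,n_s$: if $x_{\tau(n_s+i)}\ne x_{\tau(i)}$, add $\mathbb{1}\{(y_{\tau(n_s+i)}-y_{\tau(i)})/(x_{\tau(n_s+i)}-x_{\tau(i)})>0\}$ to $s$; otherwise add an independent $\mathrm{Bern}(1/2)$ sample to $s$. Then replace $s$ by $s+\mathcal{N}(0,\frac1{2\rho})$. Let $N_{\alpha/2},N_{1-\alpha/2}$ be the $\alpha/2$ and $1-\alpha/2$ quantiles of $\mathcal{N}(n_s/2,\ n_s/4+\frac1{2\rho})$. Output ''reject the null'' if $s\notin(N_{\alpha/2},N_{1-\alpha/2})$ and ''fail to reject the null'' otherwise.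
   Context: Two datasets of $n$ rows are neighboring if they differ in exactly one row. A randomized mechanism $\mathcal{M}$ satisfies $\rho$-zCDP if for all neighboring datasets $\mathbf{x},\mathbf{x}'$ and all $\alpha'\in(1,\infty)$, $D_{\alpha'}(\mathcal{M}(\mathbf{x})\|\mathcal{M}(\mathbf{x}'))\le\rho\alpha'$, where $D_{\alpha'}$ is the Rényi divergence of order $\alpha'$. *)

From HB Require Import structures.
From mathcomp Require Import all_boot all_order all_algebra all_fingroup.
From mathcomp Require Import all_classical all_reals all_analysis.
Set Implicit Arguments. Unset Strict Implicit. Unset Printing Implicit Defensive.
Import Order.TTheory GRing.Theory Num.Theory.
Local Open Scope classical_set_scope.
Local Open Scope ring_scope.

Section DPBern.
Variable R : realType.

Definition dataset (n : nat) := {ffun 'I_n -> R * R}.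

Definition neighboring (n : nat) (x x' : dataset n) : bool :=
  #|[set i | x i != x' i]| == 1%N.

Definition renyi_div (O : finType) (a : R) (P Q : O -> R) : \bar R :=
  if [exists o, (Q o == 0) && (P o != 0)] then +oo%E
  else ((a - 1)^-1 * ln (\sum_(o | P o != 0) P o `^ a * Q o `^ (1 - a)))%:E.

Definition zCDP (O : finType) (n : nat) (rho : R) (M : dataset n -> O -> R) : Prop :=
  forall x x' : dataset n, neighboring x x' ->
  forall a : R, 1 < a -> (renyi_div a (M x) (M x') <= (rho * a)%:E)%E.

(** Indices tau(i) and tau(n_s + i) (0-based, i < n_s = floor(n/2)). *)
Lemma half_lt_nat (n i : nat) : (i < n./2)%N -> (i < n)%N /\ (n./2 + i < n)%N.
Proof.
move=> h; have e := odd_double_half n; rewrite -addnn in e.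
split.
  rewrite -e; apply: (leq_trans h); rewrite addnA; exact: leq_addl.
rewrite -[X in (_ < X)%N]e addnA (addnC (odd n)) -addnA ltn_add2l.
apply: (leq_trans h); exact: leq_addl.
Qed.

Lemma half_lt_l (n : nat) (i : 'I_n./2) : (i < n)%N.
Proof. exact: (half_lt_nat (ltn_ord i)).1. Qed.

Lemma half_lt_r (n : nat) (i : 'I_n./2) : (n./2 + i < n)%N.
Proof. exact: (half_lt_nat (ltn_ord i)).2. Qed.

Definition idx_l (n : nat) (i : 'I_n./2) : 'I_n := Ordinal (half_lt_l i).
Definition idx_r (n : nat) (i : 'I_n./2) : 'I_n := Ordinal (half_lt_r i).

Definition bern_stat (n : nat) (x : dataset n) (tau : {perm 'I_n})
    (c : {ffun 'I_n./2 -> bool}) : nat :=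
  (\sum_(i < n./2)
    (let a := x (tau (idx_l i)) in let b := x (tau (idx_r i)) in
     if b.1 != a.1 then ((0 < (b.2 - a.2) / (b.1 - a.1))%R : nat) else (c i : nat)))%N.

Definition normal_quantile (m sd p : R) : R :=
  inf [set t : R | (p%:E <= normal_prob m sd `]-oo, t])%E].

Definition DPBern_reject_prob (rho alpha : R) (n : nat) (x : dataset n) : R :=
  let ns := n./2 in
  let sd_noise := Num.sqrt (1 / (2 * rho)) in
  let sd_null := Num.sqrt (ns%:R / 4 + 1 / (2 * rho)) in
  let lo := normal_quantile (ns%:R / 2) sd_null (alpha / 2) in
  let hi := normal_quantile (ns%:R / 2) sd_null (1 - alpha / 2) in
  (#|{perm 'I_n}|%:R)^-1 * (2 ^+ ns)^-1 *
  \sum_(tau : {perm 'I_n}) \sum_(c : {ffun 'I_ns -> bool})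
     fine (normal_prob (bern_stat x tau c)%:R sd_noise (~` `]lo, hi[)).

(** Output distribution of DPBern: true = "reject the null",
    false = "fail to reject the null". *)
Definition DPBern (rho alpha : R) (n : nat) (x : dataset n) (o : bool) : R :=
  if o then DPBern_reject_prob rho alpha x else 1 - DPBern_reject_prob rho alpha x.

End DPBern.

From HB Require Import structures.
From mathcomp Require Import all_boot all_order all_algebra all_fingroup.
From mathcomp Require Import all_classical all_reals all_analysis.
From mathcomp Require Import ring lra zify.
Import Order.TTheory GRing.Theory Num.Theory.
Local Open Scope classical_set_scope.
Local Open Scope ring_scope.
Set Implicit Arguments. Unset Strict Implicit.

(* For a > 1 the map (p, q) |-> p^a q^(1-a), whose sum over outcomes defines
   the Renyi divergence, is the supremum over T of the linear forms
   [renyi_tangent a T]. Upper bounds on these linear forms therefore survive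
   every linear operation of the mechanism: integrating the Gaussian density
   over the rejection region and averaging over the permutation and the coins.
   For two Gaussians of variance s^2 and means m, m', the tangent form of the
   densities is at most exp(a(a-1)(m-m')^2/(2s^2)) times a Gaussian density,
   and the masses of the latter over the two outcomes add up to one. Each row
   enters at most one of the disjoint pairs, so the statistic has sensitivity
   1, and s^2 = 1/(2 rho) gives a Renyi divergence of order a at most rho a. *)

Section RenyiTangent.
Variables (R : realType) (a : R).
Hypothesis a_gt1 : 1 < a.

Let a_gt0 : 0 < a := lt_trans ltr01 a_gt1.

Definition renyi_tangent (T p q : R) : R :=
  a * expR ((a - 1) * T) * p + (1 - a) * expR (a * T) * q.

Lemma renyi_tangent_expR_le (T U V : R) :
  renyi_tangent T (expR U) (expR V) <= expR (a * U + (1 - a) * V).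
Proof.
have ia_ge0 : 0 <= a^-1 by rewrite invr_ge0 ltW.
have ia_le1 : a^-1 <= 1 by rewrite invf_le1 // ltW.
(* convexity of expR, with weights 1/a and 1 - 1/a *)
have := convex_expR (Itv01 ia_ge0 ia_le1) (a * U + (1 - a) * V) (a * T + V).
rewrite !convRE /=.
have -> : a^-1 * (a * U + (1 - a) * V) + (1 - a^-1) * (a * T + V) =
          (a - 1) * T + U.
  by field; rewrite gt_eqF.
move/(ler_wpM2l (ltW a_gt0)).
rewrite /renyi_tangent -!mulrA -!expRD mulrDr !mulrA mulfV ?gt_eqF // mul1r.
rewrite mulrBr mulr1 mulfV ?gt_eqF //; lra.
Qed.

Lemma renyi_tangent_sum (I : finType) (w p q : I -> R) (T : R) :
  renyi_tangent T (\sum_i w i * p i) (\sum_i w i * q i) =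
  \sum_i w i * renyi_tangent T (p i) (q i).
Proof.
rewrite /renyi_tangent !big_distrr -big_split /=.
by apply: eq_bigr => i _; ring.
Qed.

Lemma renyi_tangent_ln_ratio (p q : R) : 0 < p -> 0 < q ->
  renyi_tangent (ln (p / q)) p q = p `^ a * q `^ (1 - a).
Proof.
move=> p_gt0 q_gt0.
rewrite /renyi_tangent /powR !gt_eqF // ln_div ?posrE //.
rewrite -{2}[p]lnK ?posrE // -{3}[q]lnK ?posrE // -!mulrA -!expRD.
have -> : (a - 1) * (ln p - ln q) + ln p = a * ln p + (1 - a) * ln q by ring.
have -> : a * (ln p - ln q) + ln q = a * ln p + (1 - a) * ln q by ring.
ring.
Qed.

Lemma renyi_tangent_bounded_neq0 (p q S : R) : 0 < p ->
  (forall T, renyi_tangent T p q <= S) -> q != 0.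
Proof.
move=> p_gt0 bounded; apply/eqP => q0.
set r := (`|S| + 1) / (a * p).
have r_gt0 : 0 < r by rewrite divr_gt0 ?mulr_gt0 // ltr_wpDl.
have := bounded (ln r / (a - 1)).
rewrite /renyi_tangent q0 mulr0 addr0 [(a - 1) * _]mulrC.
rewrite divfK ?subr_eq0 ?gt_eqF //.
rewrite lnK ?posrE // mulrAC mulrC /r divfK ?mulf_neq0 ?gt_eqF //.
by have := ler_norm S; lra.
Qed.

End RenyiTangent.

Lemma renyi_div_le (R : realType) (O : finType) (a eps : R) (P Q : O -> R) :
  1 < a -> 0 <= eps -> (forall o, P o != 0 -> Q o != 0) ->
  \sum_(o | P o != 0) P o `^ a * Q o `^ (1 - a) <= expR ((a - 1) * eps) ->
  (renyi_div a P Q <= eps%:E)%E.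
Proof.
move=> a_gt1 eps_ge0 PQ sum_le; rewrite /renyi_div.
case: ifPn => [/existsP [j /andP [/eqP Qj0 Pj0]] | _].
  by have := PQ j Pj0; rewrite Qj0 eqxx.
have a1_gt0 : 0 < a - 1 by rewrite subr_gt0.
rewrite lee_fin ler_pdivrMl //.
set S := \sum_(o | _) _ in sum_le *.
have [S_le0 | S_gt0] := lerP S 0; first by rewrite ln0 // mulr_ge0 // ltW.
by rewrite -ler_expR lnK ?posrE.
Qed.

Section NormalMass.
Variables (R : realType) (s : R).
Hypothesis s_neq0 : s != 0.
Local Notation mu := (@lebesgue_measure R).

Definition normal_mass (m : R) (B : set R) : R := fine (normal_prob m s B).

Lemma normal_pdf_expR (m x : R) :
  normal_pdf m s x = expR (ln (normal_peak s) - (x - m) ^+ 2 / (s ^+ 2 *+ 2)).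
Proof.
rewrite /normal_pdf (negbTE s_neq0) expRD lnK ?posrE ?normal_peak_gt0 //.
by rewrite /normal_fun mulNr.
Qed.

Lemma normal_pdf_renyi_tangent_le (a T m m' x : R) : 1 < a ->
  renyi_tangent a T (normal_pdf m s x) (normal_pdf m' s x) <=
  expR (a * (a - 1) * (m - m') ^+ 2 / (s ^+ 2 *+ 2)) *
  normal_pdf (a * m + (1 - a) * m') s x.
Proof.
move=> a_gt1; rewrite !normal_pdf_expR -expRD.
apply: le_trans (renyi_tangent_expR_le a_gt1 _ _ _) _.
by rewrite ler_expR le_eqVlt; apply/orP; left; apply/eqP; field.
Qed.

Lemma integrable_normal_pdf_on (m : R) (B : set R) : measurable B ->
  mu.-integrable B (EFin \o normal_pdf m s).
Proof.
move=> mB; exact: (@integrableS _ _ _ mu setT B _ measurableT mB (@subsetT _ B)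
  (integrable_normal_pdf m s)).
Qed.

Lemma integrable_scaled_normal_pdf_on (k m : R) (B : set R) : measurable B ->
  mu.-integrable B (EFin \o (fun x => k * normal_pdf m s x)).
Proof.
move=> mB.
have := @integrableZl _ _ _ mu B mB k _ (integrable_normal_pdf_on m mB).
apply: (@eq_integrable _ _ _ mu B mB) => x _.
by rewrite /= EFinM.
Qed.

Lemma normal_mass_ge0 (m : R) (B : set R) : 0 <= normal_mass m B.
Proof. by apply: Rintegral_ge0 => x _; exact: normal_pdf_ge0. Qed.

Lemma normal_massC (m : R) (A : set R) : measurable A ->
  normal_mass m (~` A) = 1 - normal_mass m A.
Proof.
move=> mA; rewrite /normal_mass probability_setC // fineB //.
exact: fin_num_measure.
Qed.

Lemma normal_mass_renyi_tangent_le (a T m m' : R) (B : set R) :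
  1 < a -> measurable B ->
  renyi_tangent a T (normal_mass m B) (normal_mass m' B) <=
  expR (a * (a - 1) * (m - m') ^+ 2 / (s ^+ 2 *+ 2)) *
  normal_mass (a * m + (1 - a) * m') B.
Proof.
move=> a_gt1 mB.
have scaled_massE k m0 :
    k * normal_mass m0 B = \int[mu]_(x in B) (k * normal_pdf m0 s x).
  by rewrite RintegralZl // integrable_normal_pdf_on.
rewrite /renyi_tangent !scaled_massE.
rewrite -RintegralD ?integrable_scaled_normal_pdf_on //.
apply: le_Rintegral => //; last by move=> x _; exact: normal_pdf_renyi_tangent_le.
  apply: (@eq_integrable _ _ _ mu B mB _ _ _ (@integrableD _ _ _ mu B mB _ _
    (integrable_scaled_normal_pdf_on _ m mB)
    (integrable_scaled_normal_pdf_on _ m' mB))).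
  by move=> x _; rewrite /= EFinD.
exact: integrable_scaled_normal_pdf_on.
Qed.

End NormalMass.

Definition normal_mixture (R : realType) (I : finType) (w m : I -> R) (s : R)
    (B : set R) : R :=
  \sum_i w i * normal_mass s (m i) B.

Lemma normal_mixture_ge0 (R : realType) (I : finType) (w m : I -> R) (s : R)
    (B : set R) :
  (forall i, 0 <= w i) -> 0 <= normal_mixture w m s B.
Proof.
by move=> w_ge0; apply: sumr_ge0 => i _; rewrite mulr_ge0 ?normal_mass_ge0.
Qed.

Lemma normal_mixtureC (R : realType) (I : finType) (w m : I -> R) (s : R)
    (A : set R) :
  \sum_i w i = 1 -> measurable A ->
  normal_mixture w m s (~` A) = 1 - normal_mixture w m s A.
Proof.
move=> w_sum1 mA; rewrite -[1]w_sum1 -sumrB; apply: eq_bigr => i _.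
by rewrite normal_massC //; ring.
Qed.

Section NormalMixtureRenyi.
Variables (R : realType) (I : finType) (w m1 m2 : I -> R) (s a d : R).
Hypotheses (w_ge0 : forall i, 0 <= w i) (w_sum1 : \sum_i w i = 1).
Hypotheses (s_neq0 : s != 0) (a_gt1 : 1 < a).
Hypothesis m1_m2 : forall i, `|m1 i - m2 i| <= d.

Let a_gt0 : 0 < a := lt_trans ltr01 a_gt1.

Let tangent_bound (B : set R) : R :=
  \sum_i w i * (expR (a * (a - 1) * (m1 i - m2 i) ^+ 2 / (s ^+ 2 *+ 2)) *
                normal_mass s (a * m1 i + (1 - a) * m2 i) B).

Let tangent_bound_ge0 (B : set R) : 0 <= tangent_bound B.
Proof.
by apply: sumr_ge0 => i _; rewrite !mulr_ge0 ?expR_ge0 ?normal_mass_ge0.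
Qed.

Let normal_mixture_renyi_tangent_le (B : set R) (T : R) : measurable B ->
  renyi_tangent a T (normal_mixture w m1 s B) (normal_mixture w m2 s B) <=
  tangent_bound B.
Proof.
move=> mB; rewrite renyi_tangent_sum; apply: ler_sum => i _.
by apply: ler_wpM2l => //; exact: normal_mass_renyi_tangent_le.
Qed.

Let tangent_bound_setUC (A : set R) : measurable A ->
  tangent_bound A + tangent_bound (~` A) <=
  expR ((a - 1) * (a * d ^+ 2 / (s ^+ 2 *+ 2))).
Proof.
move=> mA; rewrite -big_split /=.
set eps := a * d ^+ 2 / (s ^+ 2 *+ 2).
have -> : expR ((a - 1) * eps) = \sum_i w i * expR ((a - 1) * eps).
  by rewrite -big_distrl /= w_sum1 mul1r.
apply: ler_sum => i _; rewrite -!mulrDr normal_massC // subrKC mulr1.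
apply: ler_wpM2l => //; rewrite ler_expR.
have S_gt0 : 0 < s ^+ 2 *+ 2 by rewrite pmulrn_lgt0 // exprn_even_gt0.
have c_ge0 : 0 <= a * (a - 1) / (s ^+ 2 *+ 2).
  by rewrite divr_ge0 ?mulr_ge0 ?subr_ge0 ?ltW.
have diff_le : (m1 i - m2 i) ^+ 2 <= d ^+ 2.
  rewrite -real_normK ?num_real //.
  by apply: lerXn2r; rewrite ?nnegrE ?(le_trans _ (m1_m2 i)).
have -> : (a - 1) * eps = a * (a - 1) / (s ^+ 2 *+ 2) * d ^+ 2.
  by rewrite /eps; ring.
by rewrite mulrAC; apply: ler_wpM2l.
Qed.

Lemma renyi_div_normal_mixture (A : set R) : measurable A ->
  (renyi_div a (fun o => normal_mixture w m1 s (if o then A else ~` A))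
               (fun o => normal_mixture w m2 s (if o then A else ~` A))
   <= (a * d ^+ 2 / (s ^+ 2 *+ 2))%:E)%E.
Proof.
move=> mA.
have mB o : measurable (if o then A else ~` A).
  by case: o => //; exact: measurableC.
set P := fun o => _; set Q := fun o => _.
have term_le o : P o != 0 ->
    Q o != 0 /\
    P o `^ a * Q o `^ (1 - a) <= tangent_bound (if o then A else ~` A).
  move=> Po_neq0.
  have P_gt0 : 0 < P o by rewrite lt0r Po_neq0 normal_mixture_ge0.
  have tangent_le T := normal_mixture_renyi_tangent_le T (mB o).
  have Qo_neq0 := renyi_tangent_bounded_neq0 a_gt1 P_gt0 tangent_le.
  have Q_gt0 : 0 < Q o by rewrite lt0r Qo_neq0 normal_mixture_ge0.
  by split => //; rewrite -renyi_tangent_ln_ratio.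
apply: renyi_div_le => //.
- apply: divr_ge0; first exact: mulr_ge0 (ltW a_gt0) (sqr_ge0 d).
  exact: mulrn_wge0 (sqr_ge0 s).
- by move=> o /term_le [].
apply: le_trans (tangent_bound_setUC mA); rewrite big_mkcond big_bool /=.
by apply: lerD; case: ifPn => [/term_le [] // | _].
Qed.

End NormalMixtureRenyi.

Lemma leq_sum_add1 (I : finType) (f g : I -> nat) :
  (forall i, f i <= 1)%N ->
  (forall i1 i2, f i1 != g i1 -> f i2 != g i2 -> i1 = i2) ->
  (\sum_i f i <= \sum_i g i + 1)%N.
Proof.
move=> f_le1 differ_once.
have [i0 fg_i0 | fg] := pickP (fun i => f i != g i); last first.
  by rewrite (eq_bigr g) ?leq_addr // => i _; move: (fg i) => /negbFE /eqP.
rewrite (bigD1 i0) // [X in (_ <= X + _)%N](bigD1 i0) //=.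
have -> : (\sum_(i | i != i0) f i = \sum_(i | i != i0) g i)%N.
  apply: eq_bigr => i i_neq_i0; apply/eqP; apply: contraNT i_neq_i0 => fg_i.
  by rewrite (differ_once _ _ fg_i fg_i0).
by have := f_le1 i0; lia.
Qed.

Lemma idx_l_inj (n : nat) : injective (@idx_l n).
Proof. by move=> i j [] /val_inj. Qed.

Lemma idx_r_inj (n : nat) : injective (@idx_r n).
Proof. by move=> i j [] /addnI /val_inj. Qed.

Lemma idx_l_neq_idx_r (n : nat) (i j : 'I_n./2) : idx_l i != idx_r j.
Proof. by apply/eqP => -[]; have := ltn_ord i; lia. Qed.

Lemma pair_of_row_unique (n : nat) (tau : {perm 'I_n}) (k : 'I_n)
    (i j : 'I_n./2) :
  tau (idx_l i) = k \/ tau (idx_r i) = k ->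
  tau (idx_l j) = k \/ tau (idx_r j) = k -> i = j.
Proof.
have same_row (u v : 'I_n) : tau u = k -> tau v = k -> u = v.
  by move=> <- /esym /perm_inj.
case=> /same_row same_i; case=> /same_i.
- exact: idx_l_inj.
- by move/eqP; rewrite (negbTE (idx_l_neq_idx_r _ _)).
- by move/esym/eqP; rewrite (negbTE (idx_l_neq_idx_r _ _)).
- exact: idx_r_inj.
Qed.

Section BernStatSensitivity.
Variables (R : realType) (n : nat).

Lemma neighboring_sym (x x' : dataset R n) : neighboring x x' -> neighboring x' x.
Proof.
rewrite /neighboring; have -> // : [set i | x' i != x i] = [set i | x i != x' i].
by apply/seteqP; split => i /=; rewrite eq_sym.
Qed.

Lemma neighboring_diff_row (x x' : dataset R n) : neighboring x x' ->
  exists k, forall i, x i != x' i -> i = k.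
Proof.
move=> /card1P [k diff_k]; exists k => i xi.
have : i \in [set i | x i != x' i] by rewrite in_setE.
by rewrite diff_k => /eqP.
Qed.

Lemma pair_sum_neighboring (F : 'I_n./2 -> R * R -> R * R -> nat)
    (tau : {perm 'I_n}) (x x' : dataset R n) :
  (forall i u v, F i u v <= 1)%N -> neighboring x x' ->
  (\sum_i F i (x (tau (idx_l i))) (x (tau (idx_r i))) <=
   \sum_i F i (x' (tau (idx_l i))) (x' (tau (idx_r i))) + 1)%N.
Proof.
move=> F_le1 /neighboring_diff_row [k diff_k]; apply: leq_sum_add1 => // i j.
have touches (l : 'I_n./2) :
    F l (x (tau (idx_l l))) (x (tau (idx_r l))) !=
    F l (x' (tau (idx_l l))) (x' (tau (idx_r l))) ->
    tau (idx_l l) = k \/ tau (idx_r l) = k.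
  have same_row r : r != k -> x r = x' r.
    by move=> r_neq_k; apply/eqP; apply: contraNT r_neq_k => /diff_k ->.
  have [|/same_row ->] := eqVneq (tau (idx_l l)) k; first by left.
  have [|/same_row ->] := eqVneq (tau (idx_r l)) k; first by right.
  by rewrite eqxx.
move=> /touches touch_i /touches touch_j.
exact: pair_of_row_unique touch_i touch_j.
Qed.

(* [bern_stat x tau c] is, by definition, the sum over the pairs of these
   votes. *)
Definition pair_vote (c : bool) (u v : R * R) : nat :=
  if v.1 != u.1 then ((0 < (v.2 - u.2) / (v.1 - u.1))%R : nat) else c.

Lemma pair_vote_le1 (c : bool) (u v : R * R) : (pair_vote c u v <= 1)%N.
Proof. by rewrite /pair_vote; case: ifP => _; [case: (_ < _)%R | case: c]. Qed.

Lemma bern_stat_neighboring (tau : {perm 'I_n}) (c : {ffun 'I_n./2 -> bool})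
    (x x' : dataset R n) :
  neighboring x x' ->
  `|(bern_stat x tau c)%:R - (bern_stat x' tau c)%:R| <= 1 :> R.
Proof.
move=> xx'.
have le_add1 (y y' : dataset R n) :
    neighboring y y' -> (bern_stat y tau c <= bern_stat y' tau c + 1)%N.
  exact: pair_sum_neighboring (fun i => pair_vote (c i)) tau y y'
    (fun i => pair_vote_le1 (c i)).
have := le_add1 _ _ xx'; have := le_add1 _ _ (neighboring_sym xx').
rewrite -!(ler_nat R) !natrD ler_distl.
set b := _%:R; set b' := _%:R; lra.
Qed.

End BernStatSensitivity.

Section DPBernMixture.
Variables (R : realType) (rho alpha : R) (n : nat).

Definition DPBern_weight : R := (#|{perm 'I_n}|%:R)^-1 * (2 ^+ n./2)^-1.

Definition DPBern_noise_sd : R := Num.sqrt (1 / (2 * rho)).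

Definition DPBern_region : set R :=
  let sd_null := Num.sqrt (n./2%:R / 4 + 1 / (2 * rho)) in
  ~` `]normal_quantile (n./2%:R / 2) sd_null (alpha / 2),
       normal_quantile (n./2%:R / 2) sd_null (1 - alpha / 2)[.

Lemma measurable_DPBern_region : measurable DPBern_region.
Proof. by apply: measurableC; exact: measurable_itv. Qed.

Lemma DPBern_weight_ge0 : 0 <= DPBern_weight.
Proof. by rewrite mulr_ge0 // invr_ge0 // exprn_ge0. Qed.

Lemma DPBern_weight_sum :
  \sum_(i : {perm 'I_n} * {ffun 'I_n./2 -> bool}) DPBern_weight = 1.
Proof.
rewrite sumr_const card_prod card_ffun card_bool card_ord -mulr_natr natrM natrX.
have perm_gt0 : (0 < #|{perm 'I_n}|)%N by apply/card_gt0P; exists 1%g.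
by rewrite /DPBern_weight; field; rewrite expf_neq0 // pnatr_eq0 -lt0n perm_gt0.
Qed.

Lemma DPBernE (x : dataset R n) :
  DPBern rho alpha x = fun o =>
    normal_mixture (fun=> DPBern_weight)
      (fun i : {perm 'I_n} * {ffun 'I_n./2 -> bool} => (bern_stat x i.1 i.2)%:R)
      DPBern_noise_sd (if o then DPBern_region else ~` DPBern_region).
Proof.
have rejectE : DPBern_reject_prob rho alpha x =
    normal_mixture (fun=> DPBern_weight)
      (fun i : {perm 'I_n} * {ffun 'I_n./2 -> bool} => (bern_stat x i.1 i.2)%:R)
      DPBern_noise_sd DPBern_region.
  by rewrite /DPBern_reject_prob pair_big big_distrr.
apply/funext => -[]; rewrite /DPBern rejectE // normal_mixtureC //.
  exact: DPBern_weight_sum.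
exact: measurable_DPBern_region.
Qed.

End DPBernMixture.

Theorem lemma4p2 (R : realType) (rho alpha : R) (n : nat) :
  0 < rho -> 0 < alpha < 1 ->
  zCDP rho (fun x : dataset R n => DPBern rho alpha x).
Proof.
move=> rho_gt0 _ x x' xx' a a_gt1; rewrite !DPBernE.
have sd2E : DPBern_noise_sd rho ^+ 2 *+ 2 = rho^-1.
  rewrite sqr_sqrtr ?divr_ge0 ?mulr_ge0 ?ltW // -mulr_natr.
  by field; rewrite gt_eqF.
have sd_neq0 : DPBern_noise_sd rho != 0.
  by rewrite gt_eqF // sqrtr_gt0 divr_gt0 // mulr_gt0.
have := renyi_div_normal_mixture (fun=> DPBern_weight_ge0 R n)
  (DPBern_weight_sum R n) sd_neq0 a_gt1
  (fun i => bern_stat_neighboring i.1 i.2 xx') (measurable_DPBern_region rho alpha n).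
by rewrite sd2E expr1n mulr1 invrK mulrC.
Qed.
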